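(* Let $n$ be an odd positive integer, fix $\epsilon$ with $0<\epsilon<\frac12$, and let the parameter space be $\Theta^*=\{(\theta,\gamma_1,\dots,\gamma_n):\theta\in\{0,1\},\ \gamma_i\ge\frac12+\epsilon\ \forall i\}$ (with $\gamma_i\le 1$). Conditionally on $(\theta,\boldsymbol\gamma)\in\Theta^*$, let $Y_1,\dots,Y_n\in\{0,1\}$ be independent with $\mathbb{P}(Y_i=1\mid\theta=1,\boldsymbol\gamma)=\mathbb{P}(Y_i=0\mid\theta=0,\boldsymbol\gamma)=\gamma_i$, and let $U\sim\mathrm{Bernoulli}(1/2)$ be independent of $\vec Y$. Decision rules are functions $\delta:\{0,1\}^n\times\{0,1\}\to\{0,1\}$ with loss $L(\theta,a)=\mathbb{I}(\theta\ne a)$ and risk $R(\delta,\xi)=\mathbb{E}[L(\theta,\delta(\vec Y,U))\mid\xi]$ for $\xi=(\theta,\boldsymbol\gamma)$. Then the majority rule $\delta_M$, defined by $\delta_M(\vec y,u)=1$ if $\bar y>\frac12$ and $\delta_M(\vec y,u)=0$ otherwise (where $\bar y=\frac1n\sum_iy_i$), is minimax on $\Theta^*$: $\sup_{\xi\in\Theta^*}R(\delta_M,\xi)=\inf_\delta\sup_{\xi\in\Theta^*}R(\delta,\xi)$.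
   Context: Since $n$ is odd, $\bar y=\frac12$ cannot occur. *)

From HB Require Import structures.
From mathcomp Require Import all_boot all_order all_algebra.
From mathcomp Require Import all_classical all_reals.
Set Implicit Arguments. Unset Strict Implicit. Unset Printing Implicit Defensive.
Import Order.TTheory GRing.Theory Num.Theory.
Local Open Scope ring_scope.
Local Open Scope classical_set_scope.

(* Observation vectors y in {0,1}^n, encoded as finite functions 'I_n -> bool
   (true = 1). The parameter xi = (theta, gamma), theta : bool (true = 1). *)
Definition obs (n : nat) := {ffun 'I_n -> bool}.

Definition rule (n : nat) := obs n -> bool -> bool.

Definition lik (R : realType) (n : nat) (theta : bool) (gamma : 'I_n -> R)
  (y : obs n) : R :=
  \prod_(i < n) (if y i == theta then gamma i else 1 - gamma i).

Definition loss (R : realType) (theta a : bool) : R := if theta != a then 1 else 0.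

Definition risk (R : realType) (n : nat) (delta : rule n)
  (xi : bool * ('I_n -> R)) : R :=
  \sum_(y : obs n) \sum_(u : bool)
     lik xi.1 xi.2 y * (1 / 2) * loss R xi.1 (delta y u).

Definition Theta_star (R : realType) (n : nat) (eps : R) :
  set (bool * ('I_n -> R)) :=
  [set xi | forall i, 1 / 2 + eps <= xi.2 i /\ xi.2 i <= 1].

Definition majority (R : realType) (n : nat) : rule n :=
  fun y _ => (1 / 2 : R) < (\sum_(i < n) (y i : nat))%:R / n%:R.

Definition max_risk (R : realType) (n : nat) (eps : R) (delta : rule n) : R :=
  sup [set risk delta xi | xi in @Theta_star R n eps].

(* Raising any gamma_i can only lower the risk of the majority rule: pair each
   y with the vector differing from it in coordinate i only.  Hence on Theta^*
   its risk is largest at the constant gamma = 1/2 + eps, where the symmetry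
   y |-> 1 - y (n odd) makes it independent of theta.  At that gamma the
   majority rule picks the theta of larger likelihood, i.e. it is the Bayes
   rule for the uniform prior on theta, so the risks at theta = 0 and
   theta = 1 of any rule sum to at least twice the maximal majority risk. *)

From HB Require Import structures.
From mathcomp Require Import all_boot all_order all_algebra.
From mathcomp Require Import all_classical all_reals.
From mathcomp Require Import ring lra zify.
Set Implicit Arguments. Unset Strict Implicit. Unset Printing Implicit Defensive.
Import Order.TTheory GRing.Theory Num.Theory.
Local Open Scope ring_scope.
Local Open Scope classical_set_scope.

Section SupInf.
Variable R : realType.

Lemma sup_image_max {T : Type} (A : set T) (f : T -> R) (x0 : T) :
  A x0 -> (forall x, A x -> f x <= f x0) -> sup (f @` A) = f x0.
Proof.
move=> Ax0 le_f; apply/le_anti/andP; split.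
  by apply: ge_sup; [exists (f x0), x0 | move=> _ [x Ax <-]; exact: le_f].
have ubf : has_ubound (f @` A) by exists (f x0) => _ [x Ax <-]; exact: le_f.
by apply: (ub_le_sup ubf); exists x0.
Qed.

Lemma inf_image_min {T : Type} (A : set T) (f : T -> R) (x0 : T) :
  A x0 -> (forall x, A x -> f x0 <= f x) -> inf (f @` A) = f x0.
Proof.
move=> Ax0 ge_f; apply/le_anti/andP; split.
  have lbf : has_lbound (f @` A) by exists (f x0) => _ [x Ax <-]; exact: ge_f.
  by apply: (ge_inf lbf); exists x0.
by apply: lb_le_inf; [exists (f x0), x0 | move=> _ [x Ax <-]; exact: ge_f].
Qed.

End SupInf.

Section Observations.
Variables (R : realType) (n : nat).
Implicit Types (theta : bool) (gamma : 'I_n -> R) (y : obs n) (delta : rule n).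

Definition expectation theta gamma (f : obs n -> R) : R :=
  \sum_(y : obs n) lik theta gamma y * f y.

Definition avg_loss delta theta y : R :=
  \sum_(u : bool) (1 / 2) * loss R theta (delta y u).

Lemma riskE delta theta gamma :
  risk delta (theta, gamma) = expectation theta gamma (avg_loss delta theta).
Proof.
rewrite /risk /expectation /avg_loss /=; apply: eq_bigr => y _; rewrite mulr_sumr.
by apply: eq_bigr => u _; rewrite -mulrA.
Qed.

Lemma sum_lik theta gamma : \sum_(y : obs n) lik theta gamma y = 1.
Proof.
rewrite /lik -(bigA_distr_bigA
  (fun i (b : bool) => if b == theta then gamma i else 1 - gamma i)) /=.
by apply: big1 => i _; rewrite big_bool; case: theta => /=; lra.
Qed.

Lemma lik_ge0 theta gamma y :
  (forall i, 0 <= gamma i <= 1) -> 0 <= lik theta gamma y.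
Proof.
move=> gamma01; apply: prodr_ge0 => i _.
by case: ifP => _; have := gamma01 i; lra.
Qed.

Lemma avg_loss_le1 delta theta y : avg_loss delta theta y <= 1.
Proof. by rewrite /avg_loss big_bool /= /loss; do 2 case: ifP => _; lra. Qed.

Lemma risk_le1 delta theta gamma :
  (forall i, 0 <= gamma i <= 1) -> risk delta (theta, gamma) <= 1.
Proof.
move=> gamma01; rewrite riskE -(sum_lik theta gamma); apply: ler_sum => y _.
by rewrite -[leRHS]mulr1 ler_wpM2l ?lik_ge0 ?avg_loss_le1.
Qed.

Lemma risk_le_max_risk (eps : R) delta xi :
  0 <= eps -> Theta_star eps xi -> risk delta xi <= max_risk eps delta.
Proof.
move=> eps_ge0 Theta_xi.
have risk_Theta_le1 xi' : Theta_star eps xi' -> risk delta xi' <= 1.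
  case: xi' => theta gamma Theta_gamma; apply: risk_le1 => i.
  by case: (Theta_gamma i) => /= lo hi; lra.
have ub : has_ubound [set risk delta xi' | xi' in Theta_star eps].
  by exists 1 => _ [xi' Theta_xi' <-]; exact: risk_Theta_le1.
by apply: (ub_le_sup ub); exists xi.
Qed.

Definition flip (i : 'I_n) y : obs n :=
  [ffun j => if j == i then ~~ y j else y j].

Lemma flipK i : involutive (flip i).
Proof.
by move=> y; apply/ffunP => j; rewrite !ffunE; case: eqP => // ->; rewrite negbK.
Qed.

Lemma sum_obs_flip_pairs i theta (F : obs n -> R) :
  \sum_(y : obs n) F y = \sum_(y : obs n | y i == theta) (F y + F (flip i y)).
Proof.
rewrite (bigID (fun y : obs n => y i == theta)) big_split /=; congr (_ + _).
rewrite (reindex_inj (can_inj (flipK i))) /=; apply: eq_bigl => y.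
by rewrite ffunE eqxx; case: (y i); case: theta.
Qed.

Definition lik_off i theta gamma y : R :=
  \prod_(j < n | j != i) (if y j == theta then gamma j else 1 - gamma j).

Lemma lik_at gamma i theta y :
  y i = theta -> lik theta gamma y = gamma i * lik_off i theta gamma y.
Proof. by move=> yi; rewrite /lik (bigD1 i) //= yi eqxx. Qed.

Lemma lik_flip_at gamma i theta y : y i = theta ->
  lik theta gamma (flip i y) = (1 - gamma i) * lik_off i theta gamma y.
Proof.
move=> yi; rewrite /lik (bigD1 i) //= !ffunE eqxx yi; case: theta yi => yi /=.
all: by congr (_ * _); apply: eq_bigr => j /negbTE ji; rewrite ffunE ji.
Qed.

Lemma eq_lik_off theta y i gamma gamma' :
  (forall j, j != i -> gamma' j = gamma j) ->
  lik_off i theta gamma' y = lik_off i theta gamma y.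
Proof. by move=> eq_off; apply: eq_bigr => j /eq_off ->. Qed.

Lemma lik_off_ge0 i theta gamma y :
  (forall j, 0 <= gamma j <= 1) -> 0 <= lik_off i theta gamma y.
Proof.
move=> gamma01; apply: prodr_ge0 => j _.
by case: ifP => _; have := gamma01 j; lra.
Qed.

(* Pairing y with flip i y, raising gamma i moves likelihood from the member
   of the pair where f is larger to the one where it is smaller. *)
Lemma expectation_raise1_le theta gamma gamma' i (f : obs n -> R) :
  (forall j, 0 <= gamma j <= 1) -> (forall j, j != i -> gamma' j = gamma j) ->
  gamma i <= gamma' i -> (forall y, y i = theta -> f y <= f (flip i y)) ->
  expectation theta gamma' f <= expectation theta gamma f.
Proof.
move=> gamma01 eq_off le_i f_mono.
rewrite /expectation !(sum_obs_flip_pairs i theta); apply: ler_sum => y /eqP yi.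
rewrite (lik_at gamma' yi) (lik_at gamma yi) (lik_flip_at gamma' yi).
rewrite (lik_flip_at gamma yi) (eq_lik_off theta y eq_off).
have P_ge0 := lik_off_ge0 i theta y gamma01.
set P := lik_off i theta gamma y; rewrite -subr_ge0.
have -> : gamma i * P * f y + (1 - gamma i) * P * f (flip i y)
    - (gamma' i * P * f y + (1 - gamma' i) * P * f (flip i y))
    = (gamma' i - gamma i) * P * (f (flip i y) - f y) by ring.
by rewrite !mulr_ge0 ?subr_ge0 ?f_mono.
Qed.

Lemma expectation_raise_le theta gamma gamma' (f : obs n -> R) :
  (forall j, 0 <= gamma j) -> (forall j, gamma j <= gamma' j) ->
  (forall j, gamma' j <= 1) ->
  (forall i y, y i = theta -> f y <= f (flip i y)) ->
  expectation theta gamma' f <= expectation theta gamma f.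
Proof.
move=> ge0 le le1 f_mono.
pose mix k (j : 'I_n) := if (j < k)%N then gamma' j else gamma j.
(* mix k.+1 raises the single coordinate k of mix k. *)
have mix0 : mix 0%N = gamma by apply/funext.
have mixn : mix n = gamma' by apply/funext => j; rewrite /mix ltn_ord.
suff mix_le k : expectation theta (mix k) f <= expectation theta gamma f.
  by rewrite -mixn.
elim: k => [|k IH]; first by rewrite mix0.
apply: le_trans IH; have [kn|nk] := ltnP k n; last first.
  have -> : mix k.+1 = mix k.
    by apply/funext => j; rewrite /mix !(leq_trans (ltn_ord j)) // ltnW.
  exact: lexx.
apply: (@expectation_raise1_le _ _ _ (Ordinal kn)).
- move=> j; have := ge0 j; have := le j; have := le1 j.
  by rewrite /mix; case: ifP => _; lra.
- move=> j neq; rewrite /mix ltnS leq_eqVlt.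
  by rewrite -[(j == k :> nat)]/(j == Ordinal kn) (negbTE neq).
- by rewrite /mix /= ltnn ltnSn; exact: le.
- exact: f_mono.
Qed.

Definition ones y : nat := (\sum_(i < n) y i)%N.

Definition flip_all y : obs n := [ffun j => ~~ y j].

Lemma flip_allK : involutive flip_all.
Proof. by move=> y; apply/ffunP => j; rewrite !ffunE negbK. Qed.

Lemma leq_ones y y' : (forall j, y j ==> y' j) -> (ones y <= ones y')%N.
Proof.
by move=> le_y; apply: leq_sum => j _; case: (y j) (le_y j); case: (y' j).
Qed.

Lemma ones_flip_all y : ones (flip_all y) = (n - ones y)%N.
Proof.
suff <- : (ones y + ones (flip_all y))%N = n by rewrite addKn.
rewrite /ones -big_split /= -[n in RHS]card_ord -sum1_card.
by apply: eq_bigr => j _; rewrite ffunE; case: (y j).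
Qed.

Lemma ones_le y : (ones y <= n)%N.
Proof.
rewrite -[n in (_ <= n)%N]card_ord -sum1_card.
by apply: leq_sum => j _; case: (y j).
Qed.

Lemma lik_flip_all theta gamma y :
  lik theta gamma (flip_all y) = lik (~~ theta) gamma y.
Proof. by apply: eq_bigr => j _; rewrite ffunE; case: (y j); case: theta. Qed.

Lemma lik_const (p : R) y :
  lik true (fun _ => p) y = p ^+ ones y * (1 - p) ^+ (n - ones y).
Proof.
rewrite -ones_flip_all /ones -!prodrXr -big_split /=.
by apply: eq_bigr => j _; rewrite ffunE; case: (y j); rewrite /= ?mulr1 ?mul1r.
Qed.

Lemma ler_exp_shift (p q : R) (a b m : nat) :
  0 <= q <= p -> (a <= b <= m)%N ->
  p ^+ a * q ^+ (m - a) <= p ^+ b * q ^+ (m - b).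
Proof.
case/andP=> q_ge0 le_qp /andP[le_ab le_bm].
have -> : (m - a = (m - b) + (b - a))%N by lia.
rewrite -[in p ^+ b](subnKC le_ab) !exprD mulrA -[leRHS]mulrA.
rewrite [p ^+ (b - a) * _]mulrC mulrA.
have p_ge0 : 0 <= p by apply: le_trans le_qp.
by rewrite ler_wpM2l ?mulr_ge0 ?exprn_ge0 // lerXn2r ?nnegrE.
Qed.

Lemma lik_const_le (p : R) y y' : 1 / 2 <= p <= 1 -> (ones y <= ones y')%N ->
  lik true (fun _ => p) y <= lik true (fun _ => p) y'.
Proof.
move=> p_half le_ones; rewrite !lik_const; apply: ler_exp_shift.
  by apply/andP; split; lra.
by rewrite le_ones ones_le.
Qed.

Lemma loss_bayes (wf wt : R) (b a : bool) :
  (b -> wf <= wt) -> (~~ b -> wt <= wf) ->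
  wf * loss R false b + wt * loss R true b
  <= wf * loss R false a + wt * loss R true a.
Proof.
by rewrite /loss; case: b => [/(_ isT) le_ft _|_ /(_ isT) le_tf]; case: a => /=; lra.
Qed.

Lemma majorityE y u : @majority R n y u = (n < 2 * ones y)%N.
Proof.
(* For n = 0 both sides are false, the left one because x / 0 = 0. *)
rewrite /majority -/(ones y); have [n0|n_gt0] := posnP n.
  have := ones_le y; rewrite n0 leqn0 => /eqP ->.
  by rewrite mul0r; apply/negbTE; rewrite -leNgt; lra.
rewrite ltr_pdivlMr ?ltr0n // -(ltr_nat R) natrM.
by apply/idP/idP; lra.
Qed.

Lemma avg_loss_majority theta y :
  avg_loss (@majority R n) theta y = loss R theta (n < 2 * ones y)%N.
Proof. by rewrite /avg_loss big_bool /= !majorityE; lra. Qed.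

Lemma avg_loss_majority_flip theta i y : y i = theta ->
  avg_loss (@majority R n) theta y <= avg_loss (@majority R n) theta (flip i y).
Proof.
move=> yi; rewrite !avg_loss_majority.
have le_ones : if theta then (ones (flip i y) <= ones y)%N
               else (ones y <= ones (flip i y))%N.
  by case: theta yi => yi; apply: leq_ones => j; rewrite ffunE;
    case: eqP => [->|]; rewrite ?yi ?implybb.
have maj_mono : if theta then (n < 2 * ones (flip i y))%N ==> (n < 2 * ones y)%N
                else (n < 2 * ones y)%N ==> (n < 2 * ones (flip i y))%N.
  by clear yi; case: theta le_ones => le_ones; apply/implyP; lia.
move: maj_mono; clear yi le_ones; rewrite /loss.
by case: theta; case: (n < _)%N; case: (n < _)%N; rewrite /= ?lexx ?ler01.
Qed.

Lemma risk_majority_sym gamma : odd n ->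
  risk (@majority R n) (true, gamma) = risk (@majority R n) (false, gamma).
Proof.
move=> n_odd; rewrite !riskE /expectation (reindex_inj (can_inj flip_allK)) /=.
apply: eq_bigr => y _; rewrite lik_flip_all !avg_loss_majority ones_flip_all.
have -> : (n < 2 * (n - ones y))%N = ~~ (n < 2 * ones y)%N.
  have := ones_le y; have := odd_double_half n; rewrite n_odd -muln2 -leqNgt.
  by move=> n_half le_n; apply/idP/idP; lia.
by rewrite /loss; case: (n < _)%N.
Qed.

Lemma risk_majority_bayes (p : R) delta : 1 / 2 <= p <= 1 ->
  risk (@majority R n) (false, fun _ => p) + risk (@majority R n) (true, fun _ => p)
  <= risk delta (false, fun _ => p) + risk delta (true, fun _ => p).
Proof.
move=> p_half; rewrite /risk -!big_split /=; apply: ler_sum => y _.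
rewrite -!big_split /=; apply: ler_sum => u _.
rewrite -!(lik_flip_all true).
apply: loss_bayes; rewrite majorityE => maj; (apply: ler_wpM2r; first lra).
all: by apply: lik_const_le; rewrite // ones_flip_all; lia.
Qed.

Lemma risk_majority_le_const (eps : R) xi :
  odd n -> 0 <= eps -> Theta_star eps xi ->
  risk (@majority R n) xi <= risk (@majority R n) (true, fun _ => 1 / 2 + eps).
Proof.
case: xi => theta gamma n_odd eps_ge0 Theta_gamma.
have -> : risk (@majority R n) (true, fun _ => 1 / 2 + eps)
        = risk (@majority R n) (theta, fun _ => 1 / 2 + eps).
  by clear Theta_gamma; case: theta; rewrite ?risk_majority_sym.
rewrite !riskE; apply: expectation_raise_le.
- by move=> _; lra.
- by move=> j; case: (Theta_gamma j).
- by move=> j; case: (Theta_gamma j).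
- by move=> i y; exact: avg_loss_majority_flip.
Qed.

End Observations.

Theorem theorem8 (R : realType) (n : nat) (eps : R) :
  odd n -> 0 < eps -> eps < 1 / 2 ->
  @max_risk R n eps (@majority R n) =
  inf [set @max_risk R n eps delta | delta in [set: rule n]].
Proof.
move=> n_odd eps_gt0 eps_lt_half.
have eps_ge0 : 0 <= eps by exact: ltW.
pose c : 'I_n -> R := fun _ => 1 / 2 + eps.
have Theta_c theta : Theta_star eps (theta, c) by move=> i; rewrite /c /=; split; lra.
pose r := risk (@majority R n) (true, c).
have max_risk_majority : max_risk eps (@majority R n) = r.
  apply: sup_image_max (Theta_c true) _ => xi.
  exact: risk_majority_le_const.
have r_le (delta : rule n) : r <= max_risk eps delta.
  have c_half : 1 / 2 <= 1 / 2 + eps <= 1 by apply/andP; split; lra.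
  have := risk_majority_bayes delta c_half.
  have := risk_le_max_risk delta eps_ge0 (Theta_c true).
  have := risk_le_max_risk delta eps_ge0 (Theta_c false).
  rewrite -risk_majority_sym // -/c -/r; lra.
apply/esym; apply: inf_image_min => // delta _.
by rewrite max_risk_majority; exact: r_le.
Qed.
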